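(* Let $0<q<1$, let $n,i$ be integers with $1\le i\le n$, and let $x\in[0,1]$. Then $$\frac{1}{([1-x]_q+[x]_q)^{n-i}}\sum_{k=i-1}^n\frac{\binom{k}{i}}{\binom{n}{i}}B_{k,n}(x,q)=[x]_q^i.$$
   Context: Let $q$ be a real number with $0<q<1$. For real $x$, the $q$-number is $[x]_q=\frac{1-q^x}{1-q}$. For a nonnegative integer $k$ and $x\in[0,1]$, the modified $q$-Bernstein polynomials $B_{k,n}(x,q)$, $n=0,1,2,\dots$, are defined by the generating function $$\frac{t^k e^{[1-x]_q t}[x]_q^k}{k!}=\sum_{n=0}^\infty B_{k,n}(x,q)\frac{t^n}{n!}.$$ Here $\binom{k}{i}=0$ when $k<i$. *)

From Stdlib Require Import Reals Lra Lia Factorial.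
From Coquelicot Require Import Coquelicot.
From Stdlib Require Import Reals Lra Lia Factorial.
Open Scope R_scope.

Definition qnum (q x : R) : R := (1 - Rpower q x) / (1 - q).

Definition binom (k i : nat) : R := if Nat.leb i k then C k i else 0.

(* Modified q-Bernstein polynomial B_{k,n}(x,q): n! times the coefficient of
   t^n in  t^k e^{[1-x]_q t} [x]_q^k / k!  (see gen_B below). *)
Definition B (k n : nat) (x q : R) : R :=
  binom n k * qnum q x ^ k * qnum q (1 - x) ^ (n - k).

Lemma pown_R (t : R) (m : nat) : @pow_n (AbsRing.Ring R_AbsRing) t m = t ^ m.
Proof. induction m as [|m IH]. reflexivity. simpl. rewrite IH. reflexivity. Qed.

Lemma gen_B (k : nat) (x q t : R) :
  is_pseries (fun n => B k n x q / INR (fact n)) t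
    (t ^ k * exp (qnum q (1 - x) * t) * qnum q x ^ k / INR (fact k)).
Proof.
set (a := qnum q (1 - x)). set (b := qnum q x).
assert (He : is_pseries (fun m => a ^ m / INR (fact m)) t (exp (a * t))).
{ pose proof (is_exp_Reals (a * t)) as H. unfold is_pseries in *.
  eapply is_series_ext; [|exact H]. intro m. simpl.
  rewrite !pow_n_pow. change (scal ?u ?v) with (mult u v). unfold mult; simpl.
  rewrite Rpow_mult_distr. transitivity (t ^ m * (a ^ m / INR (fact m))); [unfold Rdiv; ring|]. f_equal; symmetry; apply pown_R. }
pose proof (is_pseries_incr_n _ k _ _ He) as H1.
pose proof (is_pseries_scal (b ^ k / INR (fact k)) _ _ _ (Rmult_comm _ _) H1) as H2.
eapply is_pseries_ext; last first.
{ replace (t ^ k * exp (a * t) * b ^ k / INR (fact k)) with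
     (scal (b ^ k / INR (fact k)) (scal (pow_n t k) (exp (a * t)))).
  exact H2. change (scal ?u ?v) with (mult u v). unfold mult; simpl.
  transitivity (b ^ k / INR (fact k) * (t ^ k * exp (a * t))); [|unfold Rdiv; ring].
  f_equal; try (change (scal ?u ?v) with (mult u v); unfold mult; simpl; f_equal; apply pown_R). }
intro n. unfold PS_scal. rewrite PS_incr_n_simplify.
change (scal ?u ?v) with (mult u v). unfold mult; simpl.
unfold B, binom. destruct (Nat.leb_spec k n) as [Hkn|Hkn].
- destruct (Compare_dec.le_lt_dec k n) as [Hc|Hc]; [|lia].
  fold a b. unfold C.
  field. repeat split; apply INR_fact_neq_0.
- destruct (Compare_dec.le_lt_dec k n) as [Hc|Hc]; [lia|]. change (zero : R) with 0. lra.
Qed.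

(* Since [binom k i / binom n i * binom n k = binom (n - i) (k - i)], the sum
   collapses, after factoring out [[x]_q^i], to the binomial expansion of
   [([x]_q + [1-x]_q)^(n-i)].  The term [k = i - 1] vanishes because
   [binom (i - 1) i = 0]. *)
From Coquelicot Require Import Coquelicot.
(* Reals is imported after Coquelicot so that [C] is the binomial coefficient, not the complex numbers. *)
From Stdlib Require Import Reals Lra Lia.
Open Scope R_scope.

Lemma Rpower_1_l (y : R) : Rpower 1 y = 1.
Proof. unfold Rpower. rewrite ln_1, Rmult_0_r. apply exp_0. Qed.

Lemma qnum_ge0 (q y : R) : 0 < q < 1 -> 0 <= y -> 0 <= qnum q y.
Proof.
  intros Hq Hy. unfold qnum.
  assert (Rpower q y <= 1) by (rewrite <- (Rpower_1_l y); apply Rle_Rpower_l; lra).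
  apply Rdiv_le_0_compat; lra.
Qed.

Lemma qnum_gt0 (q y : R) : 0 < q < 1 -> 0 < y -> 0 < qnum q y.
Proof.
  intros Hq Hy. unfold qnum.
  assert (Rpower q y < 1) by (rewrite <- (Rpower_1_l y); apply Rlt_Rpower_l; lra).
  apply Rdiv_lt_0_compat; lra.
Qed.

Lemma qnum_complement_sum_gt0 (q x : R) :
  0 < q < 1 -> 0 <= x <= 1 -> 0 < qnum q (1 - x) + qnum q x.
Proof.
  intros Hq Hx.
  assert (0 <= qnum q (1 - x)) by (apply qnum_ge0; lra).
  assert (0 <= qnum q x) by (apply qnum_ge0; lra).
  destruct (Rlt_or_le 0 x).
  - assert (0 < qnum q x) by (apply qnum_gt0; lra). lra.
  - assert (0 < qnum q (1 - x)) by (apply qnum_gt0; lra). lra.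
Qed.

Lemma binom_C (k i : nat) : (i <= k)%nat -> binom k i = C k i.
Proof. intro H. unfold binom. now rewrite (proj2 (Nat.leb_le i k) H). Qed.

Lemma binom_lt (k i : nat) : (k < i)%nat -> binom k i = 0.
Proof. intro H. unfold binom. now rewrite (proj2 (Nat.leb_gt i k) H). Qed.

Lemma C_subset_of_subset (n k i : nat) : (i <= k <= n)%nat ->
  C k i / C n i * C n k = C (n - i) (k - i).
Proof.
  intro H. unfold C.
  replace (n - i - (k - i))%nat with (n - k)%nat by lia.
  pose proof INR_fact_neq_0. field. repeat split; auto.
Qed.

Lemma sum_binom_ratio_Bernstein (a b : R) (n i : nat) : (1 <= i <= n)%nat ->
  sum_f (i - 1) n (fun k => binom k i / binom n i * (binom n k * b ^ k * a ^ (n - k)))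
  = b ^ i * (b + a) ^ (n - i).
Proof.
  intro Hi. unfold sum_f.
  replace (n - (i - 1))%nat with (S (n - i)) by lia.
  rewrite decomp_sum by lia. simpl Init.Nat.pred.
  rewrite (binom_lt (0 + (i - 1)) i) by lia.
  unfold Rdiv at 1. rewrite !Rmult_0_l, Rplus_0_l.
  rewrite binomial, scal_sum.
  apply sum_eq. intros j Hj.
  replace (S j + (i - 1))%nat with (j + i)%nat by lia.
  rewrite !binom_C, <- !Rmult_assoc, C_subset_of_subset by lia.
  replace (j + i - i)%nat with j by lia.
  replace (n - (j + i))%nat with (n - i - j)%nat by lia.
  rewrite pow_add. ring.
Qed.

Theorem theorem7 (q x : R) (n i : nat) :
  0 < q < 1 -> (1 <= i <= n)%nat -> 0 <= x <= 1 ->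
  / (qnum q (1 - x) + qnum q x) ^ (n - i) *
    sum_f (i - 1) n (fun k => binom k i / binom n i * B k n x q)
  = qnum q x ^ i.
Proof.
  intros Hq Hi Hx.
  pose proof (qnum_complement_sum_gt0 q x Hq Hx) as Hpos.
  unfold B. rewrite sum_binom_ratio_Bernstein by exact Hi.
  rewrite (Rplus_comm (qnum q x)). field.
  apply pow_nonzero. lra.
Qed.
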